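(* Let $n,k$ be positive integers, $F\subseteq\{1,\dots,n\}$ with $|F|=k$, and $0<\eta\le\frac1{4k}$. Let $x(t)\in\{0,1\}^n$ satisfy, for every $t\ge0$, $x_i(t)=1$ for $i\in F$ and $x_i(t)=0$ for $i\notin F$. Let $w(0)\in\mathbb R^n$ have all coordinates equal with $0<w_i(0)<\frac1{\sqrt k}$ for every $i$, and for $t\ge1$ define $w(t)=w(t-1)+\eta\,z(t-1)\big(x(t-1)-z(t-1)w(t-1)\big)$ where $z(t-1)=w(t-1)\cdot x(t-1)$. Then for every $t\ge1$: (1) all $w_i(t)$, $i\in F$, are equal, and all $w_i(t)$, $i\notin F$, are equal; (2) $0<w_i(t)<\frac1{\sqrt k}$ for every $i$; (3) $w_i(t)>w_i(0)$ for every $i\in F$; (4) $w_i(t)<w_i(0)$ for every $i\notin F$.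
   Context: This describes repeated application of Oja's learning rule to a single neuron that is engaged in learning at every step and always receives the same input vector. *)

From HB Require Import structures.
From mathcomp Require Import all_boot all_order all_algebra.
Set Implicit Arguments. Unset Strict Implicit. Unset Printing Implicit Defensive.
Import Order.TTheory GRing.Theory Num.Theory.
Local Open Scope ring_scope.

Definition oja_out (R : ringType) (n : nat) (w x : 'I_n -> R) : R :=
  \sum_(j < n) w j * x j.

Definition oja_step (R : ringType) (n : nat) (eta : R) (w x : 'I_n -> R) : 'I_n -> R :=
  fun i => w i + eta * oja_out w x * (x i - oja_out w x * w i).

From HB Require Import structures.
From mathcomp Require Import all_boot all_order all_algebra.
From mathcomp Require Import ring lra.
Set Implicit Arguments. Unset Strict Implicit. Unset Printing Implicit Defensive.
Import Order.TTheory GRing.Theory Num.Theory.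
Local Open Scope ring_scope.

(* With a constant input (the indicator of F) and a start that is constant on
   F and on its complement, Oja's rule keeps the weight vector of this
   two-level shape.  Writing c = eta |F| and s = sqrt |F| a for the normalized
   weight on F, one step multiplies the weight on F by 1 + c (1 - s^2) and the
   weight off F by 1 - c s^2.  For 0 < s < 1 and 2c <= 1 the first factor
   exceeds 1 without pushing s up to 1, and the second lies in (0, 1); so by
   induction the weights on F increase and stay below 1 / sqrt |F|, while the
   others decrease and stay positive. *)

Definition two_level (T : Type) (n : nat) (F : {set 'I_n}) (a b : T) : 'I_n -> T :=
  fun i => if i \in F then a else b.

Lemma oja_out_two_level (R : nzRingType) (n : nat) (F : {set 'I_n}) (a b : R) :
  oja_out (two_level F a b) (two_level F 1 0) = #|F|%:R * a.
Proof.
rewrite /oja_out (eq_bigr (fun i => if i \in F then a else 0)); last first.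
  by move=> i _; rewrite /two_level; case: ifP; rewrite ?mulr1 ?mulr0.
by rewrite -big_mkcond sumr_const mulr_natl.
Qed.

Lemma oja_step_two_level (R : nzRingType) (n : nat) (F : {set 'I_n}) (eta a b : R) :
  let z := #|F|%:R * a in
  oja_step eta (two_level F a b) (two_level F 1 0)
    =1 two_level F (a + eta * z * (1 - z * a)) (b + eta * z * (0 - z * b)).
Proof. by move=> z i; rewrite /oja_step oja_out_two_level /two_level; case: ifP. Qed.

Lemma eq_oja_step (R : nzRingType) (n : nat) (eta : R) (w w' x x' : 'I_n -> R) :
  w =1 w' -> x =1 x' -> oja_step eta w x =1 oja_step eta w' x'.
Proof.
move=> ew ex i; have eq_out : oja_out w x = oja_out w' x'.
  by apply: eq_bigr => j _; rewrite ew ex.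
by rewrite /oja_step eq_out ew ex.
Qed.

Lemma oja_gain_gt1 (R : realFieldType) (c s : R) :
  0 < c -> 0 <= s < 1 -> 1 < 1 + c * (1 - s ^+ 2).
Proof. by move=> c_gt0 /andP[s_ge0 s_lt1]; rewrite ltrDl mulr_gt0 // subr_gt0 expr_lt1. Qed.

(* 1 - s (1 + c (1 - s^2)) = (1 - s) (1 - c s (1 + s)), and c s (1 + s) < 2c. *)
Lemma oja_gain_normalized_lt1 (R : realFieldType) (c s : R) :
  0 <= c -> 2 * c <= 1 -> 0 <= s < 1 -> s * (1 + c * (1 - s ^+ 2)) < 1.
Proof.
move=> c_ge0 c_le_half /andP[s_ge0 s_lt1].
have cs_lt1 : c * s * (1 + s) < 1 by nra.
have -> : s * (1 + c * (1 - s ^+ 2)) = 1 - (1 - s) * (1 - c * s * (1 + s)) by ring.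
by rewrite gtrBl pmulr_rgt0 subr_gt0.
Qed.

Lemma oja_decay_gt0 (R : realFieldType) (c s : R) :
  c <= 1 -> 0 <= s < 1 -> 0 < 1 - c * s ^+ 2.
Proof. move=> c_le1 /andP[s_ge0 s_lt1]; nra. Qed.

Lemma oja_decay_lt1 (R : realFieldType) (c s : R) :
  0 < c -> 0 < s -> 1 - c * s ^+ 2 < 1.
Proof. by move=> c_gt0 s_gt0; rewrite gtrBl mulr_gt0 // exprn_gt0. Qed.

Section OjaOrbit.
Variables (R : realFieldType) (n : nat) (F : {set 'I_n}) (eta q : R).
Variables (x w : nat -> 'I_n -> R).
Hypotheses (q_gt0 : 0 < q) (sqr_q : q ^+ 2 = #|F|%:R).
Hypotheses (eta_gt0 : 0 < eta) (eta_small : 2 * (eta * #|F|%:R) <= 1).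
Hypothesis x_indicator : forall t, x t =1 two_level F 1 0.
Hypothesis w_step : forall t, w t.+1 = oja_step eta (w t) (x t).

Let c := eta * #|F|%:R.

Lemma oja_orbit_two_level t a b : w t =1 two_level F a b ->
  w t.+1 =1 two_level F (a * (1 + c * (1 - (q * a) ^+ 2))) (b * (1 - c * (q * a) ^+ 2)).
Proof.
move=> wt i; rewrite w_step (eq_oja_step eta wt (x_indicator t)) oja_step_two_level.
by rewrite /two_level /c -sqr_q; case: ifP => _; ring.
Qed.

Lemma oja_orbit_monotone t a b : w t =1 two_level F a b ->
  0 < a -> q * a < 1 -> 0 < b ->
  exists a' b', [/\ w t.+1 =1 two_level F a' b', a < a', q * a' < 1, 0 < b' & b' < b].
Proof.
move=> wt a_gt0 qa_lt1 b_gt0.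
have c_gt0 : 0 < c by rewrite mulr_gt0 // -sqr_q exprn_gt0.
have qa_gt0 : 0 < q * a by rewrite mulr_gt0.
have qa_range : 0 <= q * a < 1 by rewrite (ltW qa_gt0) qa_lt1.
have c_le1 : c <= 1 by apply: le_trans eta_small; rewrite ler_pMl ?ler1n.
exists (a * (1 + c * (1 - (q * a) ^+ 2))), (b * (1 - c * (q * a) ^+ 2)); split.
- exact: oja_orbit_two_level.
- by rewrite ltr_pMr // oja_gain_gt1.
- by rewrite mulrA oja_gain_normalized_lt1 // ltW.
- by rewrite mulr_gt0 // oja_decay_gt0.
- by rewrite gtr_pMr // oja_decay_lt1.
Qed.

Lemma oja_orbit_separates (w0 : R) : w 0 =1 two_level F w0 w0 ->
  0 < w0 -> q * w0 < 1 ->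
  forall t, exists a b, [/\ w t.+1 =1 two_level F a b, w0 < a, q * a < 1, 0 < b & b < w0].
Proof.
move=> w0E w0_gt0 qw0_lt1; elim=> [|t [a [b [wt w0_lt_a qa_lt1 b_gt0 b_lt_w0]]]].
  have [a [b [? ? ? ? ?]]] := oja_orbit_monotone w0E w0_gt0 qw0_lt1 w0_gt0.
  by exists a, b.
have [a' [b' [wt' a_lt_a' qa'_lt1 b'_gt0 b'_lt_b]]] :=
  oja_orbit_monotone wt (lt_trans w0_gt0 w0_lt_a) qa_lt1 b_gt0.
by exists a', b'; split=> //; [exact: lt_trans a_lt_a' | exact: lt_trans b_lt_w0].
Qed.

End OjaOrbit.

Theorem mainTheorem9 (R : rcfType) (n k : nat) (F : {set 'I_n}) (eta : R)
    (x w : nat -> 'I_n -> R) :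
  (0 < n)%N -> (0 < k)%N -> #|F| = k ->
  0 < eta -> eta <= (4 * k%:R)^-1 ->
  (forall t i, x t i = if i \in F then 1 else 0) ->
  (forall i j, w 0%N i = w 0%N j) ->
  (forall i, 0 < w 0%N i < (Num.sqrt k%:R)^-1) ->
  (forall t, w t.+1 = oja_step eta (w t) (x t)) ->
  forall t, (1 <= t)%N ->
    [/\ (forall i j, i \in F -> j \in F -> w t i = w t j),
        (forall i j, i \notin F -> j \notin F -> w t i = w t j),
        (forall i, 0 < w t i < (Num.sqrt k%:R)^-1),
        (forall i, i \in F -> w 0%N i < w t i) &
        (forall i, i \notin F -> w t i < w 0%N i)].
Proof.
move=> _ k_gt0 cardF eta_gt0 eta_le hx w0_const w0_bound hstep [//|t] _.
set q := Num.sqrt k%:R.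
have k_gt0R : (0 : R) < k%:R by rewrite ltr0n.
have q_gt0 : 0 < q by rewrite sqrtr_gt0.
have sqr_q : q ^+ 2 = #|F|%:R by rewrite cardF sqr_sqrtr // ltW.
have eta_small : 2 * (eta * #|F|%:R) <= 1.
  have k4_gt0 : (0 : R) < 4 * k%:R by rewrite mulr_gt0.
  by move: eta_le; rewrite -(ler_pM2l k4_gt0) mulfV ?gt_eqF // cardF; nra.
have lt_invq y : (y < q^-1) = (q * y < 1) by rewrite -ltr_pdivlMl // mulr1.
have [i0 i0F] : exists i0, i0 \in F by apply/set0Pn; rewrite -card_gt0 cardF.
have w0_eq i : w 0%N i = w 0%N i0 := w0_const i i0.
have w0E : w 0%N =1 two_level F (w 0%N i0) (w 0%N i0).
  by move=> i; rewrite /two_level w0_eq; case: ifP.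
have /andP[w0_gt0 w0_lt] := w0_bound i0; rewrite lt_invq in w0_lt.
have [a [b [wE w0_lt_a qa_lt1 b_gt0 b_lt_w0]]] :=
  oja_orbit_separates q_gt0 sqr_q eta_gt0 eta_small hx hstep w0E w0_gt0 w0_lt t.
split=> [i j iF jF|i j iF jF|i|i iF|i iF].
- by rewrite !wE /two_level iF jF.
- by rewrite !wE /two_level (negbTE iF) (negbTE jF).
- rewrite wE /two_level lt_invq; case: ifP => _.
  + by rewrite qa_lt1 (lt_trans w0_gt0).
  + by rewrite b_gt0 (lt_trans _ w0_lt) // ltr_pM2l.
- by rewrite wE /two_level iF w0_eq.
- by rewrite wE /two_level (negbTE iF) w0_eq.
Qed.
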